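(* Let $n\ge2$ and let $\boldsymbol x^*$ be a pure Nash equilibrium of $\mathcal L(n,S)$. Then all $\boldsymbol x^*$-balanced players obtain the same payoff.
   Context: Network: $(V,E)$ is a finite connected graph with no vertex of degree $2$; each edge $e$ has a length $\lambda(e)>0$. $S$ is the metric measure space obtained by identifying each edge with a segment of length $\lambda(e)$, with length measure $\lambda$ and shortest-path distance $d$. Vertices have their graph degree, and interior points of edges have degree $2$. Location game $\mathcal L(n,S)$: $n$ players each choose a point of $S$. Consumers are distributed according to $\lambda$, and each shops at a closest occupied location. Consumers equidistant from several closest occupied locations are split equally among those locations, and the share of a location is split equally among the players located there. Payoff is the mass of consumers attracted. Nash equilibria are pure. For a profile $\boldsymbol x$ and $w\in S$: if $\operatorname{card}\{i:x_i=w\}=\operatorname{degree}(w)$, the players located at $w$ are called $\boldsymbol x$-balanced and $w$ is called $\boldsymbol x$-saturated. *)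

From Stdlib Require Import Reals Lra Lia List Arith Relations ClassicalEpsilon.
Import ListNotations.
Open Scope R_scope.

(* Vertices are 0 .. nv-1, edges are 0 .. ne-1; edge e joins src e and dst e
   and has length len e. *)
Record network := Network {
  nv  : nat;
  ne  : nat;
  src : nat -> nat;
  dst : nat -> nat;
  len : nat -> R
}.

Definition vdegree (N : network) (v : nat) : nat :=
  length (filter (fun e => orb (Nat.eqb (src N e) v) (Nat.eqb (dst N e) v)) (seq 0 (ne N))).

Definition adj (N : network) (a b : nat) : Prop :=
  exists e, (e < ne N)%nat /\
    ((src N e = a /\ dst N e = b) \/ (src N e = b /\ dst N e = a)).

Definition wf_network (N : network) : Prop :=
  (0 < nv N)%nat /\
  (forall e, (e < ne N)%nat ->
      (src N e < nv N)%nat /\ (dst N e < nv N)%nat /\ src N e <> dst N e /\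
      0 < len N e) /\
  (forall e f, (e < ne N)%nat -> (f < ne N)%nat -> e <> f ->
      ~ ((src N e = src N f /\ dst N e = dst N f) \/
         (src N e = dst N f /\ dst N e = src N f))) /\
  (forall a b, (a < nv N)%nat -> (b < nv N)%nat -> clos_refl_trans nat (adj N) a b) /\
  (forall v, (v < nv N)%nat -> vdegree N v <> 2%nat).

Inductive walk_len (N : network) : nat -> nat -> R -> Prop :=
| WL_nil : forall a, walk_len N a a 0
| WL_cons : forall a c b e l,
    (e < ne N)%nat ->
    ((src N e = a /\ dst N e = c) \/ (src N e = c /\ dst N e = a)) ->
    walk_len N c b l -> walk_len N a b (len N e + l).

(* infimum of a set of reals (chosen classically; 0 if it does not exist) *)
Definition Rinf (P : R -> Prop) : R :=
  epsilon (inhabits 0)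
    (fun d => (forall l, P l -> d <= l) /\
              (forall d', (forall l, P l -> d' <= l) -> d' <= d)).

Definition vdist (N : network) (a b : nat) : R := Rinf (walk_len N a b).

(* Points of S: a vertex, or an interior point of edge e at distance t
   from src e (0 < t < len e). *)
Inductive point := PV (v : nat) | PE (e : nat) (t : R).

Definition valid_point (N : network) (p : point) : Prop :=
  match p with
  | PV v => (v < nv N)%nat
  | PE e t => (e < ne N)%nat /\ 0 < t < len N e
  end.

Definition point_eq_dec (p q : point) : {p = q} + {p <> q}.
Proof. decide equality; first [apply Req_EM_T | apply Nat.eq_dec]. Defined.

Definition exits (N : network) (p : point) : list (nat * R) :=
  match p with
  | PV v => [(v, 0)]
  | PE e t => [(src N e, t); (dst N e, len N e - t)]
  end.

Fixpoint Rmin_list (d : R) (l : list R) : R :=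
  match l with [] => d | x :: l' => Rmin x (Rmin_list d l') end.

(* shortest-path distance in S: leave p through an end of its edge, travel
   along a shortest path in the graph, enter q; or, if p and q are interior
   points of the same edge, travel directly along that edge. *)
Definition dist (N : network) (p q : point) : R :=
  let via := flat_map (fun a => map (fun b => snd a + vdist N (fst a) (fst b) + snd b)
                                    (exits N q)) (exits N p) in
  let direct := match p, q with
                | PE e t, PE f s => if Nat.eq_dec e f then [Rabs (t - s)] else []
                | _, _ => []
                end in
  match direct ++ via with
  | [] => 0
  | x :: l => Rmin_list x l
  end.

Definition profile := nat -> point.

Definition nb_at (n : nat) (x : profile) (w : point) : nat :=
  length (filter (fun j => if point_eq_dec (x j) w then true else false) (seq 0 n)).

Definition degree (N : network) (w : point) : nat :=
  match w with PV v => vdegree N v | PE _ _ => 2%nat end.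

(* distance from consumer y to the nearest occupied location (n >= 1) *)
Definition dmin (N : network) (n : nat) (x : profile) (y : point) : R :=
  Rmin_list (dist N y (x 0%nat)) (map (fun j => dist N y (x j)) (seq 0 n)).

Definition is_closest (N : network) (n : nat) (x : profile) (y : point) (j : nat) : bool :=
  if Req_EM_T (dist N y (x j)) (dmin N n x y) then true else false.

(* number of distinct closest occupied locations: closest players j that are
   the first (smallest index) player at their location *)
Definition nb_closest_locs (N : network) (n : nat) (x : profile) (y : point) : nat :=
  length (filter (fun j => andb (is_closest N n x y j)
                   (forallb (fun k => if point_eq_dec (x k) (x j) then false else true)
                           (seq 0 j)))
                 (seq 0 n)).

Definition share (N : network) (n : nat) (x : profile) (i : nat) (y : point) : R :=
  if is_closest N n x y i
  then / INR (nb_closest_locs N n x y) * / INR (nb_at n x (x i))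
  else 0.

Definition edge_pt (N : network) (e : nat) (t : R) : point :=
  if Rle_dec t 0 then PV (src N e)
  else if Rle_dec (len N e) t then PV (dst N e)
  else PE e t.

Definition Rint (f : R -> R) (a b : R) : R :=
  epsilon (inhabits 0)
    (fun r => exists pr : Riemann_integrable f a b, RiemannInt pr = r).

Definition payoff (N : network) (n : nat) (x : profile) (i : nat) : R :=
  fold_right Rplus 0
    (map (fun e => Rint (fun t => share N n x i (edge_pt N e t)) 0 (len N e))
         (seq 0 (ne N))).

Definition valid_profile (N : network) (n : nat) (x : profile) : Prop :=
  forall i, (i < n)%nat -> valid_point N (x i).

Definition deviate (x : profile) (i : nat) (p : point) : profile :=
  fun j => if Nat.eq_dec j i then p else x j.

Definition is_nash (N : network) (n : nat) (x : profile) : Prop :=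
  valid_profile N n x /\
  forall i p, (i < n)%nat -> valid_point N p ->
    payoff N n (deviate x i p) i <= payoff N n x i.

Definition balanced (N : network) (n : nat) (x : profile) (i : nat) : Prop :=
  nb_at n x (x i) = degree N (x i).

(* A balanced player j shares its location w with deg(w) - 1 other players, so it gets at most
   a 1/deg(w) share of any consumer. Let i be any player and P_1, ..., P_deg(w) the points at a
   small distance eps from w, one in each direction. A consumer served from w that is not within
   eps of w or of an end of its edge is strictly closer to one of the P_k than to every occupied
   location, so i captures it entirely by moving to that P_k. Summing over k and using the Nash
   property, deg(w) * payoff(i) >= sum_k payoff of i at P_k >= deg(w) * payoff(j) - O(eps).
   Letting eps go to 0 gives payoff(j) <= payoff(i), hence balanced players all earn the same.

   The payoffs are integrals of piecewise constant functions: seen from the point at offset t on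
   an edge, the distance to a fixed point is a minimum of finitely many functions t + c and
   c - t, so every share is constant between the crossing points of these functions. *)

From Stdlib Require Import Reals Lra Lia List Relations ClassicalEpsilon.
From Coquelicot Require Import Coquelicot.
Import ListNotations.
Open Scope R_scope.

Lemma Rmin_list_le x l z : In z (x :: l) -> Rmin_list x l <= z.
Proof.
  revert z; induction l as [|y l IH]; intros z Hz; simpl in *.
  - destruct Hz as [<-|[]]; lra.
  - destruct Hz as [<-|[<-|Hz]].
    + pose proof (IH x (or_introl eq_refl)); pose proof (Rmin_r y (Rmin_list x l)); lra.
    + apply Rmin_l.
    + pose proof (IH z (or_intror Hz)); pose proof (Rmin_r y (Rmin_list x l)); lra.
Qed.

Lemma Rmin_list_in x l : In (Rmin_list x l) (x :: l).
Proof.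
  induction l as [|y l IH]; simpl in *; auto.
  unfold Rmin; destruct (Rle_dec y (Rmin_list x l)); tauto.
Qed.

Lemma Rmin_list_eq x l m :
  In m (x :: l) -> (forall z, In z (x :: l) -> m <= z) -> Rmin_list x l = m.
Proof.
  intros Hm Hlb. apply Rle_antisym; [now apply Rmin_list_le | apply Hlb, Rmin_list_in].
Qed.

Definition sumR (l : list R) : R := fold_right Rplus 0 l.

Lemma sumR_nonneg l : (forall a, In a l -> 0 <= a) -> 0 <= sumR l.
Proof.
  induction l as [|a l IH]; simpl; intros H; [lra|].
  pose proof (H a (or_introl eq_refl)). pose proof (IH (fun b Hb => H b (or_intror Hb))). lra.
Qed.

Lemma sumR_ge_member l a : (forall b, In b l -> 0 <= b) -> In a l -> a <= sumR l.
Proof.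
  induction l as [|b l IH]; simpl; intros H Ha; [easy|].
  pose proof (sumR_nonneg l (fun c Hc => H c (or_intror Hc))).
  destruct Ha as [<-|Ha]; [lra|].
  pose proof (H b (or_introl eq_refl)). pose proof (IH (fun c Hc => H c (or_intror Hc)) Ha). lra.
Qed.

Lemma sumR_le {X} (f g : X -> R) l : (forall a, In a l -> f a <= g a) ->
  sumR (map f l) <= sumR (map g l).
Proof.
  induction l as [|a l IH]; simpl; intros H; [lra|].
  pose proof (H a (or_introl eq_refl)). pose proof (IH (fun b Hb => H b (or_intror Hb))). lra.
Qed.

Lemma sumR_plus {X} (f g : X -> R) l :
  sumR (map (fun a => f a + g a) l) = sumR (map f l) + sumR (map g l).
Proof. induction l; simpl; [ring|]. rewrite IHl. ring. Qed.

Lemma sumR_scal {X} (f : X -> R) c l : sumR (map (fun a => c * f a) l) = c * sumR (map f l).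
Proof. induction l; simpl; [ring|]. rewrite IHl. ring. Qed.

Lemma sumR_const {X} c (l : list X) : sumR (map (fun _ => c) l) = c * INR (length l).
Proof.
  induction l as [|a l IH]; [simpl; ring|].
  simpl length. rewrite S_INR. simpl. rewrite IH. ring.
Qed.

Lemma sumR_swap {X Y} (F : X -> Y -> R) l1 l2 :
  sumR (map (fun a => sumR (map (fun b => F a b) l2)) l1) =
  sumR (map (fun b => sumR (map (fun a => F a b) l1)) l2).
Proof.
  induction l1 as [|a l1 IH]; simpl.
  - rewrite sumR_const. ring.
  - rewrite IH, <- sumR_plus. reflexivity.
Qed.

Lemma Forall2_map_diag {X Y Z} (P : Y -> Z -> Prop) (f : X -> Y) (g : X -> Z) l :
  (forall k, In k l -> P (f k) (g k)) -> Forall2 P (map f l) (map g l).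
Proof. induction l; simpl; constructor; auto. Qed.

Lemma length_filter_single (p : nat -> bool) n i : (i < n)%nat -> p i = true ->
  (forall k, (k < n)%nat -> k <> i -> p k = false) -> length (filter p (seq 0 n)) = 1%nat.
Proof.
  intros Hi Hpi Hk. replace (filter p (seq 0 n)) with [i]; [easy|].
  induction n as [|n IH]; [lia|].
  rewrite seq_S, filter_app. simpl.
  destruct (Nat.eq_dec i n) as [->|Hne].
  - rewrite Hpi, (filter_ext_in p (fun _ => false)), filter_false; [easy|].
    intros k Hkin%in_seq. apply Hk; lia.
  - rewrite (Hk n), <- IH by (auto; lia). now rewrite app_nil_r.
Qed.

Lemma Rinv_INR_bounds k : 0 <= / INR k <= 1.
Proof.
  destruct k as [|k]; [simpl; rewrite Rinv_0; lra|].
  assert (1 <= INR (S k)) by (rewrite S_INR; pose proof (pos_INR k); lra).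
  split; [left; apply Rinv_0_lt_compat; lra|].
  rewrite <- Rinv_1. apply Rinv_le_contravar; lra.
Qed.

Lemma exists_avoiding (L : list R) a b : a < b -> exists eps, a < eps < b /\ ~ In eps L.
Proof.
  revert a b; induction L as [|c L IH]; intros a b Hab.
  - exists ((a + b) / 2). split; [lra|easy].
  - destruct (Rle_dec c ((a + b) / 2)).
    + destruct (IH ((a + b) / 2) b) as [eps [Heps Hnin]]; [lra|].
      exists eps. split; [lra|]. intros [<-|]; [lra|auto].
    + destruct (IH a ((a + b) / 2)) as [eps [Heps Hnin]]; [lra|].
      exists eps. split; [lra|]. intros [<-|]; [lra|auto].
Qed.

Lemma exists_pos_lower_bound (l : list R) : (forall a, In a l -> 0 < a) ->
  exists m, 0 < m /\ forall a, In a l -> m <= a.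
Proof.
  induction l as [|c l IH]; intros Hpos.
  - exists 1. split; [lra|easy].
  - destruct IH as [m [Hm Hml]]; [intros; apply Hpos; now right|].
    pose proof (Hpos c (or_introl eq_refl)).
    exists (Rmin m c). split; [now apply Rmin_glb_lt|].
    intros a [<-|Ha]; [apply Rmin_r|]. pose proof (Rmin_l m c). pose proof (Hml a Ha). lra.
Qed.

Lemma le_of_le_plus_small a b c m (L : list R) : 0 < m -> 0 <= c ->
  (forall eps, 0 < eps < m -> ~ In eps L -> a <= b + c * eps) -> a <= b.
Proof.
  intros Hm Hc H. destruct (Rle_dec a b) as [|Hgt]; [easy|].
  assert (Hpos : 0 < Rmin m ((a - b) / (c + 1)))
    by (apply Rmin_glb_lt; [easy|apply Rdiv_lt_0_compat; lra]).
  destruct (exists_avoiding L 0 (Rmin m ((a - b) / (c + 1)))) as [eps [Heps Hnin]]; [easy|].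
  pose proof (Rmin_l m ((a - b) / (c + 1))). pose proof (Rmin_r m ((a - b) / (c + 1))).
  assert (Hsmall : eps * (c + 1) < a - b).
  { apply Rmult_lt_reg_r with (/ (c + 1)); [apply Rinv_0_lt_compat; lra|].
    rewrite Rmult_assoc, Rinv_r by lra. unfold Rdiv in *. lra. }
  specialize (H eps ltac:(lra) Hnin). nra.
Qed.

Lemma Rinf_glb (P : R -> Prop) m :
  (exists l, P l) -> (forall l, P l -> m <= l) ->
  (forall l, P l -> Rinf P <= l) /\
  (forall d, (forall l, P l -> d <= l) -> d <= Rinf P).
Proof.
  intros [l0 Hl0] Hm.
  set (E z := P (- z)).
  assert (HE : exists z, E z) by (exists (- l0); unfold E; now rewrite Ropp_involutive).
  assert (Hb : bound E) by (exists (- m); intros z Hz; apply Hm in Hz; lra).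
  destruct (completeness E Hb HE) as [s [Hub Hlub]].
  unfold Rinf. apply epsilon_spec. exists (- s). split.
  - intros l Hl. enough (- l <= s) by lra.
    apply Hub. unfold E. now rewrite Ropp_involutive.
  - intros d Hd. enough (s <= - d) by lra.
    apply Hlub. intros z Hz. apply Hd in Hz. lra.
Qed.

Lemma Rint_eq_RInt f a b : ex_RInt f a b -> Rint f a b = RInt f a b.
Proof.
  intros H. pose proof (ex_RInt_Reals_0 f a b H) as pr.
  unfold Rint. destruct (epsilon_spec (inhabits 0)
    (fun r => exists pr : Riemann_integrable f a b, RiemannInt pr = r)) as [pr' <-].
  - now exists (RiemannInt pr), pr.
  - symmetry. apply RInt_Reals.
Qed.

Lemma RInt_zero_on (f : R -> R) a b : a <= b -> (forall t, a < t < b -> f t = 0) -> RInt f a b = 0.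
Proof.
  intros Hab H. rewrite (RInt_ext f (fun _ => 0)), RInt_const.
  - apply Rmult_0_r.
  - intros t Ht. rewrite Rmin_left, Rmax_right in Ht by lra. auto.
Qed.

Lemma RInt_le_support_length (f : R -> R) a b c1 c2 : a <= b -> c1 <= c2 -> ex_RInt f a b ->
  (forall t, a < t < b -> f t <= 1) ->
  (forall t, a < t < b -> t < c1 \/ c2 < t -> f t = 0) ->
  RInt f a b <= c2 - c1.
Proof.
  intros Hab Hc Hf Hle1 Hzero.
  set (u := Rmax a (Rmin b c1)). set (v := Rmax a (Rmin b c2)).
  assert (Hu : a <= u <= v /\ v <= b /\ v - u <= c2 - c1)
    by (unfold u, v, Rmax, Rmin; repeat destruct Rle_dec; lra).
  assert (Hau : ex_RInt f a u)
    by (apply (@ex_RInt_Chasles_1 R_CompleteNormedModule) with b; auto; lra).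
  assert (Hub : ex_RInt f u b)
    by (apply (@ex_RInt_Chasles_2 R_CompleteNormedModule) with a; auto; lra).
  assert (Huv : ex_RInt f u v)
    by (apply (@ex_RInt_Chasles_1 R_CompleteNormedModule) with b; auto; lra).
  assert (Hvb : ex_RInt f v b)
    by (apply (@ex_RInt_Chasles_2 R_CompleteNormedModule) with u; auto; lra).
  rewrite <- (RInt_Chasles f a u b Hau Hub), <- (RInt_Chasles f u v b Huv Hvb).
  rewrite (RInt_zero_on f a u), (RInt_zero_on f v b); try lra.
  - assert (Hmid : RInt f u v <= RInt (fun _ => 1) u v).
    { apply RInt_le; try lra; auto using ex_RInt_const. intros; apply Hle1; lra. }
    rewrite RInt_const in Hmid.
    unfold scal in Hmid; simpl in Hmid; unfold mult in Hmid; simpl in Hmid.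
    unfold plus; simpl. lra.
  - intros t Ht. apply Hzero; [lra|right].
    unfold v, Rmax, Rmin in Ht; repeat destruct Rle_dec; lra.
  - intros t Ht. apply Hzero; [lra|left].
    unfold u, Rmax, Rmin in Ht; repeat destruct Rle_dec; lra.
Qed.

Definition piecewise_const (K : list R) (f : R -> R) (a b : R) : Prop :=
  forall u v, a <= u -> u < v -> v <= b -> (forall k, In k K -> ~ (u < k < v)) ->
    exists c, forall t, u < t < v -> f t = c.

Lemma piecewise_const_restrict K f a b a' b' : a <= a' -> b' <= b ->
  piecewise_const K f a b -> piecewise_const K f a' b'.
Proof. intros Ha Hb Hf u v Hu Huv Hv. apply Hf; lra. Qed.

Lemma piecewise_const_drop k K f a b : k <= a \/ b <= k ->
  piecewise_const (k :: K) f a b -> piecewise_const K f a b.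
Proof.
  intros Hk Hf u v Hu Huv Hv HK. apply Hf; auto. intros k' [<-|Hk']; [lra|auto].
Qed.

Lemma ex_RInt_piecewise_const K f a b : a <= b -> piecewise_const K f a b -> ex_RInt f a b.
Proof.
  revert a b; induction K as [|k K IH]; intros a b Hab Hf.
  - destruct (Req_dec a b) as [<-|Hne]; [apply ex_RInt_point|].
    destruct (Hf a b) as [c Hc]; try lra; [easy|].
    apply ex_RInt_ext with (fun _ => c); [|apply ex_RInt_const].
    intros t Ht. rewrite Rmin_left, Rmax_right in Ht by lra. symmetry; auto.
  - destruct (Rlt_dec a k), (Rlt_dec k b).
    + apply ex_RInt_Chasles with k; apply IH, (piecewise_const_drop k);
        try apply (piecewise_const_restrict _ _ a b); auto; lra.
    + apply IH, (piecewise_const_drop k); auto; lra.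
    + apply IH, (piecewise_const_drop k); auto; lra.
    + apply IH, (piecewise_const_drop k); auto; lra.
Qed.

Lemma ex_RInt_sumR {X} (F : X -> R -> R) l a b : (forall P, In P l -> ex_RInt (F P) a b) ->
  ex_RInt (fun t => sumR (map (fun P => F P t) l)) a b.
Proof.
  induction l as [|P l IH]; simpl; intros H.
  - apply (ex_RInt_const a b 0).
  - apply (ex_RInt_plus (F P)); auto.
Qed.

Lemma RInt_sumR {X} (F : X -> R -> R) l a b : (forall P, In P l -> ex_RInt (F P) a b) ->
  RInt (fun t => sumR (map (fun P => F P t) l)) a b = sumR (map (fun P => RInt (F P) a b) l).
Proof.
  induction l as [|P l IH]; intros H.
  - simpl. rewrite RInt_const. apply Rmult_0_r.
  - transitivity (RInt (F P) a b + RInt (fun t => sumR (map (fun P => F P t) l)) a b).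
    + exact (RInt_plus (F P) _ a b (H P (or_introl eq_refl))
               (ex_RInt_sumR F l a b (fun Q HQ => H Q (or_intror HQ)))).
    + rewrite IH; [reflexivity|]. intros Q HQ. apply H. now right.
Qed.

Definition indicator (c1 c2 t : R) : R :=
  if Rle_dec c1 t then if Rle_dec t c2 then 1 else 0 else 0.

Lemma indicator_cases c1 c2 t :
  indicator c1 c2 t = 1 \/ (indicator c1 c2 t = 0 /\ (t < c1 \/ c2 < t)).
Proof. unfold indicator; repeat destruct Rle_dec; [left|right..]; split; auto; lra. Qed.

Lemma ex_RInt_indicator c1 c2 a b : a <= b -> ex_RInt (indicator c1 c2) a b.
Proof.
  intros Hab. apply ex_RInt_piecewise_const with [c1; c2]; auto.
  intros u v Hu Huv Hv HK. exists (indicator c1 c2 ((u + v) / 2)). intros t Ht.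
  pose proof (HK c1 (or_introl eq_refl)). pose proof (HK c2 (or_intror (or_introl eq_refl))).
  unfold indicator; repeat destruct Rle_dec; lra.
Qed.

Lemma RInt_indicator_le c1 c2 a b : a <= b -> c1 <= c2 -> RInt (indicator c1 c2) a b <= c2 - c1.
Proof.
  intros. apply RInt_le_support_length; auto using ex_RInt_indicator.
  - intros t _. destruct (indicator_cases c1 c2 t) as [->|[-> _]]; lra.
  - intros t _ Ht. unfold indicator; repeat destruct Rle_dec; lra.
Qed.

(** * Distances *)

Section Walks.

Variable N : network.
Hypothesis HN : wf_network N.

Lemma edge_wf e : (e < ne N)%nat ->
  (src N e < nv N)%nat /\ (dst N e < nv N)%nat /\ src N e <> dst N e /\ 0 < len N e.
Proof. destruct HN as [_ [HE _]]. apply HE. Qed.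

Lemma walk_len_nonneg a b l : walk_len N a b l -> 0 <= l.
Proof.
  induction 1 as [|a c b e l He _ _ IH]; [lra|].
  pose proof (proj2 (proj2 (proj2 (edge_wf e He)))). lra.
Qed.

Lemma walk_len_app a b c l1 l2 :
  walk_len N a b l1 -> walk_len N b c l2 -> walk_len N a c (l1 + l2).
Proof.
  intros H1; revert c l2; induction H1; intros c' l2 H2.
  - now rewrite Rplus_0_l.
  - rewrite Rplus_assoc. econstructor; eauto.
Qed.

Lemma walk_len_exists a b : (a < nv N)%nat -> (b < nv N)%nat -> exists l, walk_len N a b l.
Proof.
  intros Ha Hb. destruct HN as [_ [_ [_ [Hconn _]]]].
  pose proof (Hconn a b Ha Hb) as Hab. clear Ha Hb.
  induction Hab as [a b [e [He Hab]]| |a b c _ [l1 H1] _ [l2 H2]].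
  - exists (len N e + 0). apply WL_cons with b; [easy|tauto|constructor].
  - exists 0. constructor.
  - exists (l1 + l2). now apply walk_len_app with b.
Qed.

Lemma vdist_le_walk a b l : (a < nv N)%nat -> (b < nv N)%nat ->
  walk_len N a b l -> vdist N a b <= l.
Proof.
  intros Ha Hb. apply (Rinf_glb _ 0); [now apply walk_len_exists | apply walk_len_nonneg].
Qed.

Lemma vdist_ge a b d : (a < nv N)%nat -> (b < nv N)%nat ->
  (forall l, walk_len N a b l -> d <= l) -> d <= vdist N a b.
Proof.
  intros Ha Hb. apply (Rinf_glb _ 0); [now apply walk_len_exists | apply walk_len_nonneg].
Qed.

Lemma vdist_refl a : (a < nv N)%nat -> vdist N a a = 0.
Proof.
  intros Ha. apply Rle_antisym.
  - apply vdist_le_walk; auto. constructor.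
  - apply vdist_ge; auto. apply walk_len_nonneg.
Qed.

Lemma walk_len_last a b l : walk_len N a b l ->
  (a = b /\ l = 0) \/
  exists f c l', (f < ne N)%nat /\
    ((src N f = c /\ dst N f = b) \/ (src N f = b /\ dst N f = c)) /\
    walk_len N a c l' /\ l = l' + len N f.
Proof.
  induction 1 as [a|a c b e l He Hac Hw IH]; [now left|right].
  destruct IH as [[<- ->]|[f [c' [l' [Hf [Hfc [Hw' ->]]]]]]].
  - exists e, a, 0. split; [easy|split; [tauto|split; [constructor|ring]]].
  - exists f, c', (len N e + l'). split; [easy|split; [easy|split; [econstructor; eauto|ring]]].
Qed.

Definition incident (v e : nat) : bool := (Nat.eqb (src N e) v || Nat.eqb (dst N e) v)%bool.

Definition other_end (e v : nat) : nat := if Nat.eqb (src N e) v then dst N e else src N e.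

Lemma edge_joining f c v : (f < ne N)%nat ->
  (src N f = c /\ dst N f = v) \/ (src N f = v /\ dst N f = c) ->
  incident v f = true /\ other_end f v = c.
Proof.
  intros Hf Hfc. destruct (edge_wf f Hf) as [_ [_ [Hsd _]]].
  unfold incident, other_end.
  destruct (Nat.eqb_spec (src N f) v), (Nat.eqb_spec (dst N f) v); simpl; intuition congruence.
Qed.

Lemma vdist_last_edge a v : (a < nv N)%nat -> (v < nv N)%nat -> a <> v ->
  exists f, (f < ne N)%nat /\ incident v f = true /\
    vdist N a (other_end f v) + len N f <= vdist N a v.
Proof.
  intros Ha Hv Hav.
  set (g f := vdist N a (other_end f v) + len N f).
  set (L := filter (incident v) (seq 0 (ne N))).
  assert (HL : forall f, In f L <-> (f < ne N)%nat /\ incident v f = true).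
  { intros f. unfold L. rewrite filter_In, in_seq. split; intros [? ?]; split; auto; lia. }
  destruct (walk_len_exists a v Ha Hv) as [l0 Hw0].
  destruct (walk_len_last a v l0 Hw0) as [[? _]|[f0 [c0 [_ [Hf0 [Hfc0 _]]]]]]; [easy|].
  assert (Hmin_le : Rmin_list (g f0) (map g L) <= vdist N a v).
  { apply vdist_ge; auto. intros l Hw.
    destruct (walk_len_last a v l Hw) as [[? _]|[f1 [c1 [l1 [Hf1 [Hfc1 [Hw1 ->]]]]]]]; [easy|].
    destruct (edge_joining f1 c1 v Hf1 Hfc1) as [Hinc Hoth].
    assert (Hc1 : (c1 < nv N)%nat) by
      (destruct (edge_wf f1 Hf1) as [? [? _]]; destruct Hfc1 as [[<- _]|[_ <-]]; auto).
    apply Rle_trans with (g f1).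
    - apply Rmin_list_le. right. apply in_map, HL. auto.
    - unfold g. rewrite Hoth. pose proof (vdist_le_walk a c1 l1 Ha Hc1 Hw1). lra. }
  destruct (Rmin_list_in (g f0) (map g L)) as [Hmin|Hmin].
  - exists f0. split; [easy|split; [exact (proj1 (edge_joining f0 c0 v Hf0 Hfc0))|]].
    change (g f0 <= vdist N a v). now rewrite Hmin.
  - apply in_map_iff in Hmin. destruct Hmin as [f [Hmin Hf]].
    exists f. apply HL in Hf. split; [easy|split; [easy|]].
    change (g f <= vdist N a v). now rewrite Hmin.
Qed.

End Walks.

Definition via_routes (N : network) (p q : point) : list R :=
  flat_map (fun a => map (fun b => snd a + vdist N (fst a) (fst b) + snd b) (exits N q))
           (exits N p).

Definition direct_routes (p q : point) : list R :=
  match p, q with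
  | PE e t, PE f s => if Nat.eq_dec e f then [Rabs (t - s)] else []
  | _, _ => []
  end.

Lemma dist_routes N p q : dist N p q =
  match direct_routes p q ++ via_routes N p q with [] => 0 | x :: l => Rmin_list x l end.
Proof. reflexivity. Qed.

Lemma routes_nonempty N p q : direct_routes p q ++ via_routes N p q <> [].
Proof. destruct p, q; unfold direct_routes, via_routes; simpl; try destruct Nat.eq_dec; easy. Qed.

Lemma dist_le_route N p q z : In z (direct_routes p q ++ via_routes N p q) -> dist N p q <= z.
Proof.
  rewrite dist_routes. destruct (direct_routes p q ++ via_routes N p q); [easy|].
  apply Rmin_list_le.
Qed.

Lemma dist_in_routes N p q : In (dist N p q) (direct_routes p q ++ via_routes N p q).
Proof.
  rewrite dist_routes. pose proof (routes_nonempty N p q).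
  destruct (direct_routes p q ++ via_routes N p q); [easy|]. apply Rmin_list_in.
Qed.

Lemma dist_le_via N p q a b : In a (exits N p) -> In b (exits N q) ->
  dist N p q <= snd a + vdist N (fst a) (fst b) + snd b.
Proof.
  intros Ha Hb. apply dist_le_route, in_or_app. right.
  apply in_flat_map. exists a. split; [easy|].
  now apply (in_map (fun b => snd a + vdist N (fst a) (fst b) + snd b)).
Qed.

Lemma dist_le_along_edge N e t s : dist N (PE e t) (PE e s) <= Rabs (t - s).
Proof.
  apply dist_le_route, in_or_app. left. simpl. destruct (Nat.eq_dec e e); [now left|easy].
Qed.

Lemma dist_cases N p q :
  (exists e t s, p = PE e t /\ q = PE e s /\ dist N p q = Rabs (t - s)) \/
  (exists a b, In a (exits N p) /\ In b (exits N q) /\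
     dist N p q = snd a + vdist N (fst a) (fst b) + snd b).
Proof.
  destruct (in_app_or _ _ _ (dist_in_routes N p q)) as [H|H].
  - left. destruct p as [v|e t], q as [w|f s]; simpl in H; try easy.
    destruct (Nat.eq_dec e f) as [<-|]; [|easy].
    destruct H as [H|[]]. now exists e, t, s.
  - right. apply in_flat_map in H. destruct H as [a [Ha H]].
    apply in_map_iff in H. destruct H as [b [Hb Hab]]. now exists a, b.
Qed.

(** * Shares are piecewise constant along edges *)

(* [(true, c)] stands for [t |-> t + c] and [(false, c)] for [t |-> c - t]. *)
Definition unit_slope := (bool * R)%type.

Definition slope_eval (a : unit_slope) (t : R) : R := if fst a then t + snd a else - t + snd a.

Definition same_order (A : list unit_slope) (t1 t2 : R) : Prop :=
  forall a b, In a A -> In b A ->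
    (slope_eval a t1 <= slope_eval b t1 <-> slope_eval a t2 <= slope_eval b t2).

Definition tracks (A : list unit_slope) (t1 t2 v1 v2 : R) : Prop :=
  exists a, In a A /\ v1 = slope_eval a t1 /\ v2 = slope_eval a t2.

Section SameOrder.

Variables (A : list unit_slope) (t1 t2 : R).
Hypothesis Hord : same_order A t1 t2.

Lemma tracks_Rmin u1 u2 w1 w2 :
  tracks A t1 t2 u1 u2 -> tracks A t1 t2 w1 w2 -> tracks A t1 t2 (Rmin u1 w1) (Rmin u2 w2).
Proof.
  intros [a [Ha [-> ->]]] [b [Hb [-> ->]]]. specialize (Hord a b Ha Hb).
  unfold Rmin; destruct (Rle_dec (slope_eval a t1) (slope_eval b t1)),
    (Rle_dec (slope_eval a t2) (slope_eval b t2)); [exists a| | |exists b]; tauto.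
Qed.

Lemma tracks_Rmin_list x1 x2 l1 l2 :
  tracks A t1 t2 x1 x2 -> Forall2 (tracks A t1 t2) l1 l2 ->
  tracks A t1 t2 (Rmin_list x1 l1) (Rmin_list x2 l2).
Proof. intros Hx Hl. induction Hl; simpl; auto using tracks_Rmin. Qed.

Lemma tracks_eq_iff u1 u2 w1 w2 :
  tracks A t1 t2 u1 u2 -> tracks A t1 t2 w1 w2 -> (u1 = w1 <-> u2 = w2).
Proof.
  intros [a [Ha [-> ->]]] [b [Hb [-> ->]]].
  pose proof (Hord a b Ha Hb) as Hab. pose proof (Hord b a Hb Ha) as Hba.
  split; intros E; apply Rle_antisym; apply Hab || apply Hba; rewrite E; lra.
Qed.

Lemma tracks_Rabs s : In (true, - s) A -> In (false, s) A ->
  tracks A t1 t2 (Rabs (t1 - s)) (Rabs (t2 - s)).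
Proof.
  intros Hp Hm. pose proof (Hord _ _ Hp Hm) as Hiff. unfold slope_eval in Hiff; simpl in Hiff.
  destruct (Rle_dec (t1 + - s) (- t1 + s)).
  - exists (false, s). unfold slope_eval; simpl.
    rewrite !Rabs_left1 by (destruct Hiff; lra). repeat split; auto; ring.
  - exists (true, - s). unfold slope_eval; simpl.
    rewrite !Rabs_right by (destruct Hiff; lra). repeat split; auto; ring.
Qed.

Lemma tracks_min_of_list L1 L2 : L1 <> [] -> Forall2 (tracks A t1 t2) L1 L2 ->
  tracks A t1 t2 (match L1 with [] => 0 | x :: l => Rmin_list x l end)
                 (match L2 with [] => 0 | x :: l => Rmin_list x l end).
Proof. intros Hne HL. destruct HL; [easy|]. now apply tracks_Rmin_list. Qed.

End SameOrder.

Definition dist_slopes (N : network) (e : nat) (q : point) : list unit_slope :=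
  flat_map (fun b => [(true, vdist N (src N e) (fst b) + snd b);
                      (false, len N e + vdist N (dst N e) (fst b) + snd b)]) (exits N q) ++
  match q with PE f s => if Nat.eq_dec e f then [(true, - s); (false, s)] else [] | _ => [] end.

Ltac tracks_by_member Hincl :=
  let rec pick := (left; reflexivity) + (right; pick) in
  eexists; split; [apply Hincl; simpl; pick | unfold slope_eval; simpl; split; ring].

Lemma tracks_dist N A e q t1 t2 : same_order A t1 t2 -> incl (dist_slopes N e q) A ->
  tracks A t1 t2 (dist N (PE e t1) q) (dist N (PE e t2) q).
Proof.
  intros Hord Hincl. rewrite !dist_routes.
  apply (tracks_min_of_list A t1 t2 Hord); [apply routes_nonempty|].
  destruct q as [b|f s]; unfold dist_slopes, direct_routes, via_routes in *; simpl in *.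
  - repeat constructor; tracks_by_member Hincl.
  - destruct (Nat.eq_dec e f) as [<-|]; simpl in *.
    + constructor; [apply tracks_Rabs; auto; apply Hincl; simpl; tauto|].
      repeat constructor; tracks_by_member Hincl.
    + repeat constructor; tracks_by_member Hincl.
Qed.

Definition profile_slopes (N : network) (n : nat) (z : profile) (e : nat) : list unit_slope :=
  dist_slopes N e (z 0%nat) ++ flat_map (fun k => dist_slopes N e (z k)) (seq 0 n).

Lemma is_closest_same_order N n z e t1 t2 k :
  same_order (profile_slopes N n z e) t1 t2 -> In k (seq 0 n) ->
  is_closest N n z (PE e t1) k = is_closest N n z (PE e t2) k.
Proof.
  intros Hord Hk. set (A := profile_slopes N n z e) in *.
  assert (Hdist : forall k, In k (seq 0 n) ->
            tracks A t1 t2 (dist N (PE e t1) (z k)) (dist N (PE e t2) (z k))).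
  { intros k' Hk'. apply tracks_dist; auto. intros a Ha. apply in_or_app. right.
    apply in_flat_map. now exists k'. }
  assert (Hdmin : tracks A t1 t2 (dmin N n z (PE e t1)) (dmin N n z (PE e t2))).
  { apply tracks_Rmin_list; auto.
    - apply tracks_dist; auto. intros a Ha. now apply in_or_app; left.
    - now apply Forall2_map_diag. }
  pose proof (tracks_eq_iff A t1 t2 Hord _ _ _ _ (Hdist k Hk) Hdmin).
  unfold is_closest.
  destruct (Req_EM_T (dist N (PE e t1) (z k)) (dmin N n z (PE e t1))),
    (Req_EM_T (dist N (PE e t2) (z k)) (dmin N n z (PE e t2))); tauto.
Qed.

Lemma share_same_order N n z e t1 t2 i :
  same_order (profile_slopes N n z e) t1 t2 -> (i < n)%nat ->
  share N n z i (PE e t1) = share N n z i (PE e t2).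
Proof.
  intros Hord Hi. unfold share, nb_closest_locs.
  rewrite (is_closest_same_order N n z e t1 t2 i Hord) by (apply in_seq; lia).
  erewrite filter_ext_in; [reflexivity|].
  intros j Hj. now rewrite (is_closest_same_order N n z e t1 t2 j Hord Hj).
Qed.

(* Slopes of the same sign never cross; they get the junk value 0. *)
Definition crossing (a b : unit_slope) : R :=
  match a, b with
  | (true, c1), (false, c2) => (c2 - c1) / 2
  | (false, c1), (true, c2) => (c1 - c2) / 2
  | _, _ => 0
  end.

Definition crossings (A : list unit_slope) : list R := flat_map (fun a => map (crossing a) A) A.

Lemma same_order_between_crossings A u v t1 t2 : u < t1 < v -> u < t2 < v ->
  (forall k, In k (crossings A) -> ~ (u < k < v)) -> same_order A t1 t2.
Proof.
  intros H1 H2 Hk a b Ha Hb.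
  assert (Hab : ~ (u < crossing a b < v)).
  { apply Hk, in_flat_map. exists a. split; [easy|]. now apply in_map. }
  destruct a as [[|] c1], b as [[|] c2]; unfold slope_eval, crossing in *; simpl in *;
    split; intro; lra.
Qed.

Lemma edge_pt_interior N e t : 0 < t < len N e -> edge_pt N e t = PE e t.
Proof.
  intros Ht. unfold edge_pt.
  destruct (Rle_dec t 0); [lra|]. destruct (Rle_dec (len N e) t); [lra|easy].
Qed.

Lemma share_piecewise_const N n z e i : (i < n)%nat ->
  piecewise_const (crossings (profile_slopes N n z e))
    (fun t => share N n z i (edge_pt N e t)) 0 (len N e).
Proof.
  intros Hi u v Hu Huv Hv HK. exists (share N n z i (PE e ((u + v) / 2))). intros t Ht.
  rewrite edge_pt_interior by lra.
  apply share_same_order; auto. apply (same_order_between_crossings _ u v); auto. lra.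
Qed.

Lemma ex_RInt_share N n z e i : (i < n)%nat -> 0 <= len N e ->
  ex_RInt (fun t => share N n z i (edge_pt N e t)) 0 (len N e).
Proof. intros. eapply ex_RInt_piecewise_const; eauto using share_piecewise_const. Qed.

Lemma payoff_eq_sum_RInt N n z k : wf_network N -> (k < n)%nat ->
  payoff N n z k =
  sumR (map (fun e => RInt (fun t => share N n z k (edge_pt N e t)) 0 (len N e) : R)
            (seq 0 (ne N))).
Proof.
  intros HN Hk. unfold payoff, sumR. f_equal. apply map_ext_in. intros e He%in_seq.
  apply Rint_eq_RInt, ex_RInt_share; auto.
  pose proof (edge_wf N HN e ltac:(lia)). lra.
Qed.

(** * Stepping towards a consumer *)

Definition nearby_points (N : network) (w : point) (eps : R) : list point :=
  match w with
  | PV v => map (fun f => if Nat.eqb (src N f) v then PE f eps else PE f (len N f - eps))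
                (filter (incident N v) (seq 0 (ne N)))
  | PE f s => [PE f (s - eps); PE f (s + eps)]
  end.

Lemma nearby_points_length N w eps : length (nearby_points N w eps) = degree N w.
Proof. destruct w; simpl; [apply length_map|easy]. Qed.

Lemma in_nearby_vertex N v f eps : (f < ne N)%nat -> incident N v f = true ->
  In (if Nat.eqb (src N f) v then PE f eps else PE f (len N f - eps)) (nearby_points N (PV v) eps).
Proof.
  intros Hf Hinc.
  apply (in_map (fun f => if Nat.eqb (src N f) v then PE f eps else PE f (len N f - eps))).
  apply filter_In. split; [apply in_seq; lia|easy].
Qed.

Section Nearby.

Variable N : network.
Hypothesis HN : wf_network N.

Lemma nearby_vertex_closer_via v p a o eps : (v < nv N)%nat -> (a < nv N)%nat -> a <> v ->
  In (a, o) (exits N p) ->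
  exists P, In P (nearby_points N (PV v) eps) /\ dist N p P <= o + vdist N a v - eps.
Proof.
  intros Hv Ha Hav Hp.
  destruct (vdist_last_edge N HN a v Ha Hv Hav) as [f [Hf [Hinc Hlast]]].
  exists (if Nat.eqb (src N f) v then PE f eps else PE f (len N f - eps)).
  split; [now apply in_nearby_vertex|].
  eapply Rle_trans; [apply (dist_le_via N _ _ (a, o) (other_end N f v, len N f - eps) Hp)|].
  - unfold other_end. destruct (Nat.eqb (src N f) v); simpl; auto.
  - simpl. lra.
Qed.

Lemma nearby_vertex_closer v e t eps : (v < nv N)%nat -> (e < ne N)%nat ->
  0 < eps -> eps < t -> t < len N e - eps ->
  exists P, In P (nearby_points N (PV v) eps) /\
    dist N (PE e t) P <= dist N (PE e t) (PV v) - eps.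
Proof.
  intros Hv He Heps Ht1 Ht2. destruct (edge_wf N HN e He) as [Hse [Hde [Hsde _]]].
  destruct (dist_cases N (PE e t) (PV v)) as [[? [? [? [_ [? _]]]]]|[a [b [Ha [Hb ->]]]]];
    [easy|].
  destruct Hb as [<-|[]]. simpl in Ha |- *.
  destruct Ha as [<-|[<-|[]]]; simpl.
  - destruct (Nat.eq_dec (src N e) v) as [Hs|Hs].
    + exists (PE e eps). split.
      * pose proof (in_nearby_vertex N v e eps He) as Hin. rewrite Hs, Nat.eqb_refl in Hin.
        apply Hin. unfold incident. now rewrite Hs, Nat.eqb_refl.
      * rewrite Hs, vdist_refl by auto. pose proof (dist_le_along_edge N e t eps).
        rewrite Rabs_right in * by lra. lra.
    + destruct (nearby_vertex_closer_via v (PE e t) (src N e) t eps) as [P [HP Hd]];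
        simpl; auto.
      exists P. split; [easy|lra].
  - destruct (Nat.eq_dec (dst N e) v) as [Hd|Hd].
    + exists (PE e (len N e - eps)). split.
      * pose proof (in_nearby_vertex N v e eps He) as Hin.
        destruct (Nat.eqb_spec (src N e) v); [congruence|].
        apply Hin. unfold incident. rewrite Hd, Nat.eqb_refl. apply Bool.orb_true_r.
      * rewrite Hd, vdist_refl by auto. pose proof (dist_le_along_edge N e t (len N e - eps)).
        rewrite Rabs_left1 in * by lra. lra.
    + destruct (nearby_vertex_closer_via v (PE e t) (dst N e) (len N e - t) eps)
        as [P [HP Hd']]; simpl; auto.
      exists P. split; [easy|lra].
Qed.

Lemma nearby_interior_closer f s e t eps : 0 < eps ->
  (e = f -> t < s - eps \/ s + eps < t) ->
  exists P, In P (nearby_points N (PE f s) eps) /\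
    dist N (PE e t) P <= dist N (PE e t) (PE f s) - eps.
Proof.
  intros Heps Hfar.
  destruct (dist_cases N (PE e t) (PE f s))
    as [[e' [t' [s' [Hp [Hq ->]]]]]|[a [b [Ha [Hb ->]]]]].
  - injection Hp as <- <-. injection Hq as -> <-.
    pose proof (dist_le_along_edge N e t (s - eps)).
    pose proof (dist_le_along_edge N e t (s + eps)).
    destruct (Hfar eq_refl); [exists (PE e (s - eps)) | exists (PE e (s + eps))];
      (split; [simpl; auto|]).
    + rewrite !Rabs_left1 in * by lra. lra.
    + rewrite !Rabs_right in * by lra. lra.
  - destruct Hb as [<-|[<-|[]]]; simpl.
    + exists (PE f (s - eps)). split; [simpl; auto|].
      pose proof (dist_le_via N (PE e t) (PE f (s - eps)) a (src N f, s - eps) Ha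
                    (or_introl eq_refl)).
      simpl in *. lra.
    + exists (PE f (s + eps)). split; [simpl; auto|].
      pose proof (dist_le_via N (PE e t) (PE f (s + eps)) a (dst N f, len N f - (s + eps)) Ha
                    (or_intror (or_introl eq_refl))).
      simpl in *. lra.
Qed.

Lemma nearby_point_closer w e t eps : valid_point N w -> (e < ne N)%nat ->
  0 < eps -> eps < t -> t < len N e - eps ->
  (forall f s, w = PE f s -> e = f -> t < s - eps \/ s + eps < t) ->
  exists P, In P (nearby_points N w eps) /\ dist N (PE e t) P <= dist N (PE e t) w - eps.
Proof.
  intros Hw He Heps Ht1 Ht2 Hfar. destruct w as [v|f s].
  - now apply nearby_vertex_closer; simpl in Hw.
  - exact (nearby_interior_closer f s e t eps Heps (Hfar f s eq_refl)).
Qed.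

End Nearby.

(** * Deviating next to a balanced player *)

Lemma share_nonneg N n x i y : 0 <= share N n x i y.
Proof.
  unfold share. destruct is_closest; [|lra].
  pose proof (Rinv_INR_bounds (nb_closest_locs N n x y)).
  pose proof (Rinv_INR_bounds (nb_at n x (x i))).
  apply Rmult_le_pos; tauto.
Qed.

Lemma nb_at_pos n x j : (j < n)%nat -> (1 <= nb_at n x (x j))%nat.
Proof.
  intros Hj. unfold nb_at.
  assert (Hin : In j (filter (fun k => if point_eq_dec (x k) (x j) then true else false)
                             (seq 0 n))).
  { apply filter_In. split; [apply in_seq; lia|]. now destruct point_eq_dec. }
  destruct (filter _ _); [easy|simpl; lia].
Qed.

Lemma nb_at_mul_share_le N n x i y : INR (nb_at n x (x i)) * share N n x i y <= 1.
Proof.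
  unfold share. destruct is_closest; [|lra].
  pose proof (Rinv_INR_bounds (nb_closest_locs N n x y)).
  destruct (nb_at n x (x i)) as [|m]; [simpl; lra|].
  assert (0 < INR (S m)) by (apply lt_0_INR; lia).
  set (K := / INR (nb_closest_locs N n x y)) in *.
  replace (INR (S m) * (K * / INR (S m))) with K by (field; lra). tauto.
Qed.

Lemma share_deviate_strictly_closest N n x i P y : (i < n)%nat ->
  (forall k, (k < n)%nat -> k <> i -> x k <> P) ->
  (forall k, (k < n)%nat -> k <> i -> dist N y P < dist N y (x k)) ->
  share N n (deviate x i P) i y = 1.
Proof.
  intros Hi Hfree Hcloser. set (z := deviate x i P).
  assert (Hzi : z i = P) by (unfold z, deviate; now destruct Nat.eq_dec).
  assert (Hzk : forall k, k <> i -> z k = x k)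
    by (intros; unfold z, deviate; now destruct Nat.eq_dec).
  assert (Hdmin : dmin N n z y = dist N y P).
  { apply Rmin_list_eq.
    - right. rewrite <- Hzi. apply (in_map (fun j => dist N y (z j))), in_seq. lia.
    - intros d [<-|Hd].
      + destruct (Nat.eq_dec 0 i) as [<-|H0]; [rewrite Hzi; lra|].
        rewrite Hzk by auto. left. apply Hcloser; auto; lia.
      + apply in_map_iff in Hd. destruct Hd as [k [<- Hk%in_seq]].
        destruct (Nat.eq_dec k i) as [->|Hki]; [rewrite Hzi; lra|].
        rewrite Hzk by auto. left. apply Hcloser; auto; lia. }
  assert (Hclosest : forall k, (k < n)%nat ->
            is_closest N n z y k = if Nat.eq_dec k i then true else false).
  { intros k Hk. unfold is_closest. rewrite Hdmin.
    destruct (Nat.eq_dec k i) as [->|Hki].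
    - rewrite Hzi. now destruct Req_EM_T.
    - rewrite Hzk by auto. specialize (Hcloser k Hk Hki). destruct Req_EM_T; [lra|easy]. }
  assert (Hlocs : nb_closest_locs N n z y = 1%nat).
  { apply length_filter_single with i; auto.
    - rewrite Hclosest by auto. destruct (Nat.eq_dec i i); [simpl|easy].
      apply forallb_forall. intros k Hk%in_seq. rewrite Hzk, Hzi by lia.
      destruct point_eq_dec as [E|]; auto. exfalso; apply (Hfree k); auto; lia.
    - intros k Hk Hki. rewrite Hclosest by auto. now destruct (Nat.eq_dec k i). }
  assert (Hat : nb_at n z (z i) = 1%nat).
  { apply length_filter_single with i; auto.
    - now destruct point_eq_dec.
    - intros k Hk Hki. rewrite Hzk, Hzi by auto. destruct point_eq_dec as [E|]; auto.
      exfalso; now apply (Hfree k). }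
  unfold share. rewrite Hclosest, Hlocs, Hat by auto. destruct (Nat.eq_dec i i); [|easy].
  simpl. rewrite Rinv_1. ring.
Qed.

Definition offset (w : point) : R := match w with PE _ s => s | PV _ => 0 end.

(* Covers the consumers of edge [e] out of reach of the pointwise argument: those within [eps]
   of an end of [e] or of [w]. *)
Definition margin (N : network) (e : nat) (w : point) (eps t : R) : R :=
  indicator 0 eps t + indicator (len N e - eps) (len N e) t +
  indicator (offset w - eps) (offset w + eps) t.

Lemma margin_cases N e w eps t : 1 <= margin N e w eps t \/
  (margin N e w eps t = 0 /\ (t < 0 \/ eps < t) /\ (t < len N e - eps \/ len N e < t) /\
   (t < offset w - eps \/ offset w + eps < t)).
Proof.
  unfold margin.
  destruct (indicator_cases 0 eps t) as [->|[-> H1]],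
    (indicator_cases (len N e - eps) (len N e) t) as [->|[-> H2]],
    (indicator_cases (offset w - eps) (offset w + eps) t) as [->|[-> H3]];
    (left; lra) || (right; repeat split; auto; lra).
Qed.

Lemma ex_RInt_margin N e w eps : 0 <= len N e -> ex_RInt (margin N e w eps) 0 (len N e).
Proof.
  intros HL. unfold margin.
  apply (ex_RInt_plus (fun t => _ + _)); [apply (ex_RInt_plus (indicator _ _))|];
    apply ex_RInt_indicator; lra.
Qed.

Lemma RInt_margin_le N e w eps : 0 <= len N e -> 0 <= eps ->
  RInt (margin N e w eps) 0 (len N e) <= 4 * eps.
Proof.
  intros HL Heps. unfold margin.
  assert (Hex : forall c1 c2, ex_RInt (indicator c1 c2) 0 (len N e)) by
    (intros; apply ex_RInt_indicator; lra).
  rewrite (RInt_plus (fun t => _ + _)), (RInt_plus (indicator _ _)); auto.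
  2: apply (ex_RInt_plus (indicator 0 eps)); auto.
  pose proof (RInt_indicator_le 0 eps 0 (len N e)).
  pose proof (RInt_indicator_le (len N e - eps) (len N e) 0 (len N e)).
  pose proof (RInt_indicator_le (offset w - eps) (offset w + eps) 0 (len N e)).
  unfold plus; simpl. lra.
Qed.

Section BalancedDeviation.

Variables (N : network) (n : nat) (x : profile) (i j : nat) (eps : R).
Hypotheses (HN : wf_network N) (Hi : (i < n)%nat) (Hj : (j < n)%nat)
  (Hbal : balanced N n x j) (Heps : 0 < eps)
  (Hfree : forall P, In P (nearby_points N (x j) eps) ->
             forall k, (k < n)%nat -> k <> i -> x k <> P).

Lemma balanced_share_le_deviations e t : valid_point N (x j) -> (e < ne N)%nat -> 0 < t < len N e ->
  INR (degree N (x j)) * share N n x j (edge_pt N e t) <=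
  sumR (map (fun P => share N n (deviate x i P) i (edge_pt N e t)) (nearby_points N (x j) eps)) +
  margin N e (x j) eps t.
Proof.
  intros Hxj He Ht. rewrite edge_pt_interior by lra. rewrite <- Hbal.
  pose proof (nb_at_mul_share_le N n x j (PE e t)) as Hle1.
  set (dev := sumR _).
  assert (Hdev : 0 <= dev).
  { apply sumR_nonneg. intros a [P [<- _]]%in_map_iff. apply share_nonneg. }
  destruct (margin_cases N e (x j) eps t) as [Hm|[-> [H1 [H2 H3]]]]; [lra|].
  destruct (is_closest N n x (PE e t) j) eqn:Hc.
  2: { unfold share. rewrite Hc. lra. }
  unfold is_closest in Hc. destruct Req_EM_T as [Hmin|]; [|easy].
  destruct (nearby_point_closer N HN (x j) e t eps Hxj He Heps) as [P [HP Hcloser]]; try lra.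
  { intros f s Hf <-. rewrite Hf in H3. simpl in H3. lra. }
  assert (Hone : share N n (deviate x i P) i (PE e t) = 1).
  { apply share_deviate_strictly_closest; auto.
    intros k Hk Hki.
    assert (Hdmin : dmin N n x (PE e t) <= dist N (PE e t) (x k)).
    { apply Rmin_list_le. right. apply (in_map (fun j => dist N (PE e t) (x j))), in_seq. lia. }
    lra. }
  assert (Hdev_ge : 1 <= dev).
  { rewrite <- Hone. apply sumR_ge_member.
    - intros a [Q [<- _]]%in_map_iff. apply share_nonneg.
    - now apply (in_map (fun P => share N n (deviate x i P) i (PE e t))). }
  lra.
Qed.

Lemma balanced_edge_le_deviations e : valid_point N (x j) -> (e < ne N)%nat ->
  INR (degree N (x j)) * RInt (fun t => share N n x j (edge_pt N e t)) 0 (len N e) <=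
  sumR (map (fun P => RInt (fun t => share N n (deviate x i P) i (edge_pt N e t)) 0 (len N e))
            (nearby_points N (x j) eps)) + 4 * eps.
Proof.
  intros Hxj He. pose proof (edge_wf N HN e He) as [_ [_ [_ HL]]].
  set (D := INR (degree N (x j))).
  set (f t := share N n x j (edge_pt N e t)).
  set (F P t := share N n (deviate x i P) i (edge_pt N e t)).
  set (g t := sumR (map (fun P => F P t) (nearby_points N (x j) eps))).
  set (m := margin N e (x j) eps).
  assert (HF : forall P, In P (nearby_points N (x j) eps) -> ex_RInt (F P) 0 (len N e))
    by (intros; apply ex_RInt_share; auto; lra).
  assert (Hf : ex_RInt f 0 (len N e)) by (apply ex_RInt_share; auto; lra).
  assert (Hg : ex_RInt g 0 (len N e)) by now apply ex_RInt_sumR.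
  assert (Hm : ex_RInt m 0 (len N e)) by (apply ex_RInt_margin; lra).
  assert (Escal : D * RInt f 0 (len N e) = RInt (fun t => D * f t) 0 (len N e))
    by (symmetry; exact (RInt_scal f 0 (len N e) D Hf)).
  assert (Eplus : RInt (fun t => g t + m t) 0 (len N e) = RInt g 0 (len N e) + RInt m 0 (len N e))
    by exact (RInt_plus g m 0 (len N e) Hg Hm).
  assert (Hle : RInt (fun t => D * f t) 0 (len N e) <= RInt (fun t => g t + m t) 0 (len N e)).
  { apply RInt_le; [lra|apply (ex_RInt_scal f); auto|apply (ex_RInt_plus g m); auto|].
    intros t Ht. now apply balanced_share_le_deviations. }
  assert (Eg : RInt g 0 (len N e) =
               sumR (map (fun P => RInt (F P) 0 (len N e)) (nearby_points N (x j) eps)))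
    by now apply RInt_sumR.
  pose proof (RInt_margin_le N e (x j) eps ltac:(lra) ltac:(lra)) as Hmargin. fold m in Hmargin.
  change (D * RInt f 0 (len N e) <=
          sumR (map (fun P => RInt (F P) 0 (len N e)) (nearby_points N (x j) eps)) + 4 * eps).
  lra.
Qed.

Lemma balanced_payoff_le_plus : is_nash N n x ->
  (forall P, In P (nearby_points N (x j) eps) -> valid_point N P) ->
  payoff N n x j <= payoff N n x i + 4 * eps * INR (ne N).
Proof.
  intros [Hx Hnash] Hvalid.
  set (D := INR (degree N (x j))).
  assert (HD : 1 <= D) by (unfold D; rewrite <- Hbal; apply (le_INR 1), nb_at_pos; auto).
  assert (Hsum := sumR_le _ _ (seq 0 (ne N))
    (fun e He => balanced_edge_le_deviations e (Hx j Hj) (proj2 (proj1 (in_seq _ _ _) He)))).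
  rewrite sumR_plus, sumR_const, sumR_scal, length_seq in Hsum.
  rewrite <- (payoff_eq_sum_RInt N n x j HN Hj) in Hsum.
  rewrite sumR_swap in Hsum. fold D in Hsum.
  assert (Hdev : sumR (map (fun P => sumR (map (fun e =>
            RInt (fun t => share N n (deviate x i P) i (edge_pt N e t)) 0 (len N e) : R)
            (seq 0 (ne N)))) (nearby_points N (x j) eps)) <= D * payoff N n x i).
  { eapply Rle_trans.
    - apply sumR_le with (g := fun _ => payoff N n x i). intros P HP.
      pose proof (Hnash i P Hi (Hvalid P HP)) as Hdev.
      rewrite (payoff_eq_sum_RInt N n (deviate x i P) i HN Hi) in Hdev. exact Hdev.
    - rewrite sumR_const, nearby_points_length. fold D. right; ring. }
  assert (Hc : 0 <= 4 * eps * INR (ne N)) by (pose proof (pos_INR (ne N)); nra).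
  set (c := 4 * eps * INR (ne N)) in *.
  destruct (Rle_dec (payoff N n x j) (payoff N n x i + c)) as [|Hgt]; [easy|].
  assert (0 <= (D - 1) * (payoff N n x j - payoff N n x i - c)) by (apply Rmult_le_pos; lra).
  nra.
Qed.

End BalancedDeviation.

Definition clearances (N : network) (w : point) : list R :=
  map (len N) (seq 0 (ne N)) ++ match w with PE f s => [s; len N f - s] | PV _ => [] end.

Lemma clearances_pos N w : wf_network N -> valid_point N w ->
  forall b, In b (clearances N w) -> 0 < b.
Proof.
  intros HN Hw b [[e [<- He%in_seq]]%in_map_iff|Hb]%in_app_or.
  - apply (edge_wf N HN e). lia.
  - destruct w as [v|f s]; [easy|]. destruct Hw as [_ Hs]. destruct Hb as [<-|[<-|[]]]; lra.
Qed.

Lemma nearby_points_valid N w eps : valid_point N w -> 0 < eps ->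
  (forall b, In b (clearances N w) -> eps < b) ->
  forall P, In P (nearby_points N w eps) -> valid_point N P.
Proof.
  intros Hw Heps Hclear P HP.
  assert (Hlen : forall f, (f < ne N)%nat -> eps < len N f)
    by (intros f Hf; apply Hclear, in_or_app; left; apply in_map, in_seq; lia).
  destruct w as [v|f s]; simpl in HP.
  - apply in_map_iff in HP. destruct HP as [f [<- Hf]].
    apply filter_In in Hf. destruct Hf as [Hf%in_seq _]. specialize (Hlen f ltac:(lia)).
    destruct (Nat.eqb (src N f) v); simpl; split; lia || lra.
  - destruct Hw as [Hf Hs].
    assert (eps < s) by (apply Hclear, in_or_app; right; simpl; auto).
    assert (eps < len N f - s) by (apply Hclear, in_or_app; right; simpl; auto).
    destruct HP as [<-|[<-|[]]]; simpl; split; auto; lra.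
Qed.

(* Contains every [eps] for which some player sits at a point of [nearby_points N w eps]. *)
Definition forbidden_radii (N : network) (n : nat) (x : profile) (w : point) : list R :=
  flat_map (fun k => match x k with
                     | PV _ => []
                     | PE g sg => [sg; len N g - sg; sg - offset w; offset w - sg]
                     end) (seq 0 n).

Lemma nearby_points_unoccupied N n x w eps k P : ~ In eps (forbidden_radii N n x w) ->
  In P (nearby_points N w eps) -> (k < n)%nat -> x k <> P.
Proof.
  intros Hnin HP Hk Hxk. apply Hnin, in_flat_map. exists k. split; [apply in_seq; lia|].
  rewrite Hxk. destruct w as [v|f s]; simpl in HP.
  - apply in_map_iff in HP. destruct HP as [f [<- _]].
    destruct (Nat.eqb (src N f) v); simpl; [left|right; left]; ring.
  - destruct HP as [<-|[<-|[]]]; simpl; [do 3 right; left|do 2 right; left]; ring.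
Qed.

Lemma balanced_payoff_le N n x i j : wf_network N -> is_nash N n x ->
  (i < n)%nat -> (j < n)%nat -> balanced N n x j -> payoff N n x j <= payoff N n x i.
Proof.
  intros HN Hnash Hi Hj Hbal.
  pose proof (proj1 Hnash j Hj) as Hxj.
  destruct (exists_pos_lower_bound (clearances N (x j))) as [m [Hm Hml]];
    [now apply clearances_pos|].
  apply (le_of_le_plus_small _ _ (4 * INR (ne N)) m (forbidden_radii N n x (x j))); auto.
  { pose proof (pos_INR (ne N)). lra. }
  intros eps Heps Hnin. rewrite Rmult_assoc, (Rmult_comm (INR (ne N))), <- Rmult_assoc.
  apply balanced_payoff_le_plus; auto; [lra| |].
  - intros P HP k Hk _. exact (nearby_points_unoccupied N n x (x j) eps k P Hnin HP Hk).
  - apply nearby_points_valid; auto; [lra|]. intros b Hb. pose proof (Hml b Hb). lra.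
Qed.

Theorem mainTheorem8 (N : network) (HN : wf_network N) (n : nat) (x : profile) :
  (2 <= n)%nat -> is_nash N n x ->
  forall i j, (i < n)%nat -> (j < n)%nat ->
    balanced N n x i -> balanced N n x j ->
    payoff N n x i = payoff N n x j.
Proof.
  intros _ Hnash i j Hi Hj Hbi Hbj.
  apply Rle_antisym; now apply balanced_payoff_le.
Qed.
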